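(* Let $n,k$ be positive integers with $k$ odd and $\gcd(k,n)=1$, let $d=\frac{3^k+1}{2}$ and $F(x)=x^d$ on $\mathrm{GF}(3^n)$. Then $F$ is almost perfect $c$-nonlinear for $c=-1$.
   Context: For a function $F:\mathrm{GF}(p^n)\to\mathrm{GF}(p^n)$ and $a,b,c\in\mathrm{GF}(p^n)$, let ${}_c\Delta_F(a,b)=\#\{x\in\mathrm{GF}(p^n): F(x+a)-cF(x)=b\}$. The $c$-differential uniformity of $F$ is ${}_c\Delta_F=\max\{{}_c\Delta_F(a,b): a,b\in\mathrm{GF}(p^n),\ \text{and } a\neq 0 \text{ if } c=1\}$. $F$ is almost perfect $c$-nonlinear (AP$c$N) if ${}_c\Delta_F=2$. *)

From HB Require Import structures.
From mathcomp Require Import all_boot all_order all_algebra all_field.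
Set Implicit Arguments. Unset Strict Implicit. Unset Printing Implicit Defensive.
Import GRing.Theory.
Local Open Scope ring_scope.

Definition cdiff_count (F : finFieldType) (f : F -> F) (c a b : F) : nat :=
  #|[set x : F | f (x + a) - c * f x == b]|.

Definition cdiff_unif (F : finFieldType) (f : F -> F) (c : F) : nat :=
  \max_(ab : F * F | (c != 1) || (ab.1 != 0)) cdiff_count f c ab.1 ab.2.

Definition APcN (F : finFieldType) (f : F -> F) (c : F) : Prop :=
  cdiff_unif f c = 2%N.

From HB Require Import structures.
From mathcomp Require Import all_boot all_order all_algebra all_field.
From mathcomp Require Import ring.
Set Implicit Arguments. Unset Strict Implicit.
Import GRing.Theory.
Local Open Scope ring_scope.

(* Write q = 3^k, so that d = (q + 1)/2.  Pass to an algebraic closure and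
   write x = w^2, x + a = z^2; a solution of (x + a)^d + x^d = b then gives
   z^2 - w^2 = a and z^(q+1) + w^(q+1) = b, with z, w in GF(9^n).  For a != 0
   the hyperbola z^2 - w^2 = a is parametrised (in characteristic 3) by
   z = t + a/t, w = t - a/t, and the second equation becomes
   T + a^(q+1)/T = -b for T = t^(q+1).  Two solutions thus have T2 = T1 or
   T2 = a^(q+1)/T1 = (a/t1)^(q+1).  Since gcd(2k, 2n) = 2 and k is odd, an
   element r of GF(9^n) with r^(q+1) = 1 satisfies r^4 = 1, so t2^2 = +-t1^2
   (after possibly replacing t1 by a/t1), which forces x2 = w2^2 to be x1 or
   -x1 - a.  Hence every equation has at most two solutions, and
   (a, b) = (1, 1) has the two solutions 0 and -1 because d is even. *)

Section FrobeniusFixedPoints.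
Variables (R : nzRingType) (p : nat) (r : R).

Lemma expr_expn_fixedM a m : r ^+ (p ^ a) = r -> r ^+ (p ^ (a * m)) = r.
Proof.
move=> ra; elim: m => [|m IHm]; first by rewrite muln0 expr1.
by rewrite mulnS expnD exprM ra IHm.
Qed.

Lemma expr_expn_fixed_gcd a b :
  r ^+ (p ^ a) = r -> r ^+ (p ^ b) = r -> r ^+ (p ^ gcdn a b) = r.
Proof.
move=> ra rb; have [->|a_gt0] := posnP a; first by rewrite gcd0n.
have [u _ /divnK bezout] := Bezoutl b a_gt0.
have := expr_expn_fixedM ((gcdn a b + u * b) %/ a) ra.
by rewrite mulnC bezout addnC expnD exprM mulnC expr_expn_fixedM.
Qed.

End FrobeniusFixedPoints.

Lemma unity_root_expn_odd (K : fieldType) (p k n : nat) (r : K) :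
  odd k -> coprime k n ->
  r ^+ (p ^ k).+1 = 1 -> r ^+ (p ^ (2 * n)) = r -> r ^+ p.+1 = 1.
Proof.
move=> k_odd kn rq rn.
have r_neq0 : r != 0.
  by apply: contra_eq_neq rq => ->; rewrite expr0n eq_sym oner_neq0.
have rk : r ^+ (p ^ k) = r^-1 by apply: (mulIf r_neq0); rewrite -exprSr rq mulVf.
have r2k : r ^+ (p ^ (2 * k)) = r.
  by rewrite mulnC expnM exprM rk exprVn rk invrK.
have r2 : r ^+ (p ^ 2) = r.
  by have := expr_expn_fixed_gcd r2k rn; rewrite -muln_gcdr (eqP kn).
have rp : r ^+ (p ^ k) = r ^+ p.
  have [m ->] : exists m, k = (2 * m).+1.
    by exists k./2; rewrite -[LHS](odd_double_half k) k_odd add1n -mul2n.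
  by rewrite expnS mulnC exprM expr_expn_fixedM.
by rewrite exprS -rp rk mulfV.
Qed.

Lemma expr_eq_expn_odd (K : fieldType) (p k n : nat) (s t : K) :
  odd k -> coprime k n -> s ^+ (p ^ (2 * n)) = s -> t ^+ (p ^ (2 * n)) = t ->
  t ^+ (p ^ k).+1 = s ^+ (p ^ k).+1 -> t ^+ p.+1 = s ^+ p.+1.
Proof.
move=> k_odd kn sn tn; have [->|s_neq0] := eqVneq s 0.
  by move/eqP; rewrite !expr0n /= expf_eq0 => /andP[_ /eqP ->]; rewrite expr0n.
move=> ts; apply: (divIf (expf_neq0 p.+1 s_neq0)).
rewrite divff ?expf_neq0 // -expr_div_n; apply: (unity_root_expn_odd k_odd kn).
  by rewrite expr_div_n ts divff ?expf_neq0.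
by rewrite expr_div_n sn tn.
Qed.

Section CharacteristicP.
Variables (K : fieldType) (p : nat).
Hypothesis pK : p \in [pchar K].

Lemma pchar_nat_expn m : [pchar K].-nat (p ^ m)%N.
Proof. by rewrite (eq_pnat _ (pcharf_eq pK)) pnatX pnat_id ?orTb ?(pcharf_prime pK). Qed.

Lemma frob_fixedD e (x y : K) :
  x ^+ (p ^ e) = x -> y ^+ (p ^ e) = y -> (x + y) ^+ (p ^ e) = x + y.
Proof. by rewrite exprDn_pchar ?pchar_nat_expn // => -> ->. Qed.

Lemma frob_fixedN e (x : K) : x ^+ (p ^ e) = x -> (- x) ^+ (p ^ e) = - x.
Proof. by rewrite exprNn_pchar ?pchar_nat_expn // => ->. Qed.

Lemma frob_fixed_div e (x y : K) :
  x ^+ (p ^ e) = x -> y ^+ (p ^ e) = y -> (x / y) ^+ (p ^ e) = x / y.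
Proof. by rewrite expr_div_n => -> ->. Qed.

Lemma frob_fixed_sqrt m (w : K) :
  (w ^+ 2) ^+ (p ^ m) = w ^+ 2 -> w ^+ (p ^ (2 * m)) = w.
Proof.
rewrite -exprM mulnC exprM => /eqP; rewrite eqf_sqr.
rewrite mul2n -addnn expnD exprM.
by case/orP => /eqP wm; rewrite wm ?exprNn_pchar ?pchar_nat_expn // wm ?opprK.
Qed.

Lemma frobD_exprS_sum k (t u : K) :
  (t + u) ^+ (p ^ k).+1 + (t - u) ^+ (p ^ k).+1 =
  2%:R * (t ^+ (p ^ k).+1 + u ^+ (p ^ k).+1).
Proof.
rewrite !exprSr exprDn_pchar ?pchar_nat_expn // exprDn_pchar ?pchar_nat_expn //.
rewrite exprNn_pchar ?pchar_nat_expn //; ring.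
Qed.

End CharacteristicP.

Section CharacteristicThree.
Variables (K : fieldType) (n k : nat).
Hypotheses (K3 : 3%N \in [pchar K]) (k_odd : odd k) (kn : coprime k n).
Local Notation q := (3 ^ k)%N.
Local Notation GF9n x := (x ^+ (3 ^ (2 * n)) = x%R :> K).

Lemma addr_mul3 (x y : K) : x + 3%:R * y = x.
Proof. by rewrite (pcharf0 K3) mul0r addr0. Qed.

Lemma mulr2n_char3 (x : K) : x *+ 2 = - x.
Proof. by rewrite -[RHS](addr_mul3 _ x) mulr2n; ring. Qed.

Lemma frob_sqr_cases (s t : K) : GF9n s -> GF9n t ->
  t ^+ q.+1 = s ^+ q.+1 -> t ^+ 2 = s ^+ 2 \/ t ^+ 2 = - s ^+ 2.
Proof.
move=> sn tn /(expr_eq_expn_odd k_odd kn sn tn) /eqP.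
by rewrite -[4%N]/(2 * 2)%N !exprM eqf_sqr => /orP[] /eqP; [left | right].
Qed.

Lemma sqr_sub_div_cases (a t1 t2 : K) : t1 != 0 -> t2 != 0 ->
  GF9n t1 -> GF9n t2 -> t2 ^+ q.+1 = t1 ^+ q.+1 ->
  (t2 - a / t2) ^+ 2 = (t1 - a / t1) ^+ 2 \/
  (t2 - a / t2) ^+ 2 = - (t1 - a / t1) ^+ 2 - a.
Proof.
move=> t1_neq0 t2_neq0 t1n t2n /(frob_sqr_cases t1n t2n) t12.
have sqrE t : t != 0 -> (t - a / t) ^+ 2 = t ^+ 2 - 2%:R * a + a ^+ 2 / t ^+ 2.
  by move=> t_neq0; field.
rewrite !sqrE //; case: t12 => ->; [left | right] => //.
by rewrite invrN mulrN -[LHS](addr_mul3 _ a); ring.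
Qed.

(* The two roots T1, a^(q+1)/T1 of the quadratic satisfied by T = t^(q+1)
   give the two cases; the second reduces to the first on replacing t1 by a/t1. *)
Lemma sqr_sub_div_pair (a t1 t2 : K) : a != 0 -> t1 != 0 -> t2 != 0 ->
  GF9n a -> GF9n t1 -> GF9n t2 ->
  t2 ^+ q.+1 + (a / t2) ^+ q.+1 = t1 ^+ q.+1 + (a / t1) ^+ q.+1 ->
  (t2 - a / t2) ^+ 2 = (t1 - a / t1) ^+ 2 \/
  (t2 - a / t2) ^+ 2 = - (t1 - a / t1) ^+ 2 - a.
Proof.
move=> a_neq0 t1_neq0 t2_neq0 an t1n t2n sum12.
have prodE t : t != 0 -> t ^+ q.+1 * (a / t) ^+ q.+1 = a ^+ q.+1.
  by move=> t_neq0; rewrite -exprMn mulrCA divff ?mulr1.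
have : (t2 ^+ q.+1 - t1 ^+ q.+1) * (t2 ^+ q.+1 - (a / t1) ^+ q.+1) = 0.
  transitivity (t2 ^+ q.+1 * t2 ^+ q.+1
    - t2 ^+ q.+1 * (t1 ^+ q.+1 + (a / t1) ^+ q.+1)
    + t1 ^+ q.+1 * (a / t1) ^+ q.+1); first by ring.
  by rewrite -sum12 prodE // -(prodE _ t2_neq0); ring.
move/eqP; rewrite mulf_eq0 !subr_eq0 => /orP[] /eqP t2q.
  exact: sqr_sub_div_cases.
have u1_neq0 : a / t1 != 0 by rewrite mulf_neq0 ?invr_eq0.
have -> : (t1 - a / t1) ^+ 2 = (a / t1 - a / (a / t1)) ^+ 2.
  by rewrite invf_div mulrCA divff ?mulr1 // -sqrrN opprB.
apply: sqr_sub_div_cases => //.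
exact: frob_fixed_div.
Qed.

Lemma hyperbola_param (a z w : K) : a != 0 -> z ^+ 2 - w ^+ 2 = a ->
  let t := - (z + w) in [/\ t != 0, z = t + a / t & w = t - a / t].
Proof.
move=> a_neq0 zwa t.
have ta : t * (w - z) = a by rewrite -zwa /t; ring.
have t_neq0 : t != 0 by apply: contra_neq a_neq0 => t0; rewrite -ta t0 mul0r.
have -> : a / t = w - z by rewrite -ta [t * _]mulrC mulfK.
split => //; rewrite /t.
- by rewrite -[RHS](addr_mul3 _ z); ring.
- by rewrite -[RHS](addr_mul3 _ w); ring.
Qed.

Lemma sqr_pair_cases (a b z1 w1 z2 w2 : K) :
  GF9n z1 -> GF9n w1 -> GF9n z2 -> GF9n w2 ->
  z1 ^+ 2 - w1 ^+ 2 = a -> z2 ^+ 2 - w2 ^+ 2 = a ->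
  z1 ^+ q.+1 + w1 ^+ q.+1 = b -> z2 ^+ q.+1 + w2 ^+ q.+1 = b ->
  w2 ^+ 2 = w1 ^+ 2 \/ w2 ^+ 2 = - w1 ^+ 2 - a.
Proof.
move=> z1n w1n z2n w2n zw1 zw2 b1 b2.
have [a0|a_neq0] := eqVneq a 0.
  have sqr_exprS (z w : K) : z ^+ 2 - w ^+ 2 = 0 -> z ^+ q.+1 = w ^+ q.+1.
    move/eqP; rewrite subr_eq0 eqf_sqr => /orP[] /eqP -> //.
    by rewrite exprNn -signr_odd /= oddX orbT mul1r.
  rewrite a0 subr0; apply: frob_sqr_cases => //.
  move: b1 b2; rewrite (sqr_exprS _ _ (etrans zw1 a0)) (sqr_exprS _ _ (etrans zw2 a0)).
  by rewrite -!mulr2n !mulr2n_char3 => <- /oppr_inj.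
have an : GF9n a.
  by rewrite -zw1 (frob_fixedD K3) ?(frob_fixedN K3) // exprAC ?z1n ?w1n.
have param z w : GF9n z -> GF9n w -> z ^+ 2 - w ^+ 2 = a ->
    exists t, [/\ t != 0, GF9n t, z = t + a / t & w = t - a / t].
  move=> zn wn /(hyperbola_param a_neq0) [t_neq0 zE wE].
  by exists (- (z + w)); split=> //; apply: (frob_fixedN K3); apply: frob_fixedD.
have [t1 [t1_neq0 t1n z1E w1E]] := param _ _ z1n w1n zw1.
have [t2 [t2_neq0 t2n z2E w2E]] := param _ _ z2n w2n zw2.
move: b1 b2; rewrite z1E w1E z2E w2E !(frobD_exprS_sum K3) !mulr_natl !mulr2n_char3.
by move=> b1 b2; apply: sqr_sub_div_pair => //; apply: oppr_inj; rewrite b1 b2.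
Qed.

End CharacteristicThree.

Lemma closed_sqr_surj (K : closedFieldType) (y : K) : exists w : K, w ^+ 2 = y.
Proof.
have [w wE] := @solve_monicpoly K 2 (nth 0 [:: y]) isT.
by exists w; rewrite wE !big_ord_recl big_ord0 /= expr0 mulr1 mul0r !addr0.
Qed.

Lemma cdiff_solution_pair (F : finFieldType) (n k d : nat) (a b x1 x2 : F) :
  odd k -> coprime k n -> 3%N \in [pchar F] -> #|F| = (3 ^ n)%N ->
  (d * 2 = (3 ^ k).+1)%N ->
  (x1 + a) ^+ d + x1 ^+ d = b -> (x2 + a) ^+ d + x2 ^+ d = b ->
  x2 = x1 \/ x2 = - x1 - a.
Proof.
move=> k_odd kn F3 cardF d2 b1 b2.
have [K [iota _]] := countable_algebraic_closure F.
have K3 : 3%N \in [pchar K] by rewrite (fmorph_pchar iota).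
have root (x : F) : exists2 w : K, w ^+ 2 = iota x & w ^+ (3 ^ (2 * n)) = w.
  have [w wx] := closed_sqr_surj (iota x).
  by exists w => //; apply: (frob_fixed_sqrt K3); rewrite wx -rmorphXn -cardF expf_card.
have zw (x : F) (z w : K) : z ^+ 2 = iota (x + a) -> w ^+ 2 = iota x ->
    z ^+ 2 - w ^+ 2 = iota a.
  by move=> -> ->; rewrite rmorphD addrAC subrr add0r.
have exprS_sum (x : F) (z w : K) : z ^+ 2 = iota (x + a) -> w ^+ 2 = iota x ->
    (x + a) ^+ d + x ^+ d = b -> z ^+ (3 ^ k).+1 + w ^+ (3 ^ k).+1 = iota b.
  by move=> zx wx <-; rewrite rmorphD !rmorphXn -zx -wx -!exprM mulnC d2.
have [z1 z1x z1n] := root (x1 + a); have [w1 w1x w1n] := root x1.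
have [z2 z2x z2n] := root (x2 + a); have [w2 w2x w2n] := root x2.
have := sqr_pair_cases K3 k_odd kn z1n w1n z2n w2n (zw _ _ _ z1x w1x)
  (zw _ _ _ z2x w2x) (exprS_sum _ _ _ z1x w1x b1) (exprS_sum _ _ _ z2x w2x b2).
rewrite w1x w2x -rmorphN -rmorphB => -[] /fmorph_inj ->; by [left | right].
Qed.

Lemma card_le2_of_pair (T : finType) (S : {set T}) (g : T -> T) :
  (forall x y, x \in S -> y \in S -> y = x \/ y = g x) -> (#|S| <= 2)%N.
Proof.
move=> Spair; have [->|[x xS]] := set_0Vmem S; first by rewrite cards0.
have sub : S \subset [set x; g x].
  apply/subsetP => y yS; rewrite !inE.
  by case: (Spair x y xS yS) => ->; rewrite eqxx ?orbT.
by apply: leq_trans (subset_leq_card sub) _; rewrite cards2; case: (_ != _).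
Qed.

Lemma cdiff_count_expr_even (F : finFieldType) (d : nat) :
  (0 < d)%N -> ~~ odd d -> (2 <= cdiff_count (fun x : F => x ^+ d) (-1)%R 1%R 1%R)%N.
Proof.
move=> d_gt0 d_even; rewrite /cdiff_count.
have sub : [set 0; -1] \subset [set x : F | (x + 1) ^+ d - (-1) * x ^+ d == 1].
  apply/subsetP => x; rewrite !inE mulN1r opprK => /orP[] /eqP ->.
    by rewrite add0r expr1n expr0n eqn0Ngt d_gt0 addr0.
  by rewrite addNr expr0n eqn0Ngt d_gt0 add0r -signr_odd (negbTE d_even).
by apply: leq_trans (subset_leq_card sub); rewrite cards2 eq_sym oppr_eq0 oner_neq0.
Qed.

Lemma dvdn4_expn3S k : odd k -> (4 %| (3 ^ k).+1)%N.
Proof.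
move=> k_odd; have [m ->] : exists m, k = (2 * m).+1.
  by exists k./2; rewrite -[LHS](odd_double_half k) k_odd add1n -mul2n.
have nine : ((3 ^ 2) ^ m %% 4 = 1)%N by rewrite -modnXm exp1n.
rewrite expnS expnM (divn_eq ((3 ^ 2) ^ m)%N 4) nine.
by rewrite mulnDr muln1 -addnS mulnA dvdn_addr ?dvdn_mull.
Qed.

Theorem theorem4 (n k : nat) (F : finFieldType) :
  (0 < n)%N -> (0 < k)%N -> odd k -> coprime k n ->
  3%N \in [pchar F] -> #|F| = (3 ^ n)%N ->
  APcN (fun x : F => x ^+ ((3 ^ k + 1) %/ 2)) (-1).
Proof.
move=> _ _ k_odd kn F3 cardF.
set d := ((3 ^ k + 1) %/ 2)%N.
have d4 := dvdn4_expn3S k_odd.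
have d2 : (d * 2 = (3 ^ k).+1)%N by rewrite divnK addn1 // (dvdn_trans _ d4).
have d_gt0 : (0 < d)%N by rewrite -(ltn_pmul2r (isT : 0 < 2)%N) d2.
have d_even : ~~ odd d by rewrite -dvdn2 -(dvdn_pmul2r (isT : 0 < 2)%N) d2.
apply/eqP; rewrite /APcN /cdiff_unif eqn_leq; apply/andP; split.
- apply/bigmax_leqP => -[a b] _; apply: (card_le2_of_pair (g := fun x => - x - a)).
  move=> x1 x2; rewrite !inE !mulN1r !opprK => /eqP b1 /eqP b2.
  exact: cdiff_solution_pair k_odd kn F3 cardF d2 b1 b2.
- apply: leq_trans (cdiff_count_expr_even F d_gt0 d_even) (leq_bigmax_cond (1, 1) _).
  by rewrite oner_neq0 orbT.
Qed.
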